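(* Let $G$ be a strongly connected network on $\mathcal{V}$ with random-walk transition matrix $P=[p_{ij}]$, stationary distribution $\pi$, and edge cost matrix $W=[w_{ij}]$. Let $L=\Pi(I-P)$ with $\Pi=\mathrm{diag}(\pi)$ and $L^+$ its Moore–Penrose pseudo-inverse. Let $r_m=\sum_{k} p_{mk}w_{mk}$ and $g_m=r_m\pi_m$. Then for all $i,j\in\mathcal{V}$ the hitting cost and commute cost satisfy $$\mathbb{U}_{ij}=\sum_m (L^+_{im}-L^+_{jm}+L^+_{jj}-L^+_{ij})\,g_m,$$ $$\mathbb{C}_{ij}=(L^+_{ii}+L^+_{jj}-L^+_{ij}-L^+_{ji})\sum_m g_m.$$
   Context: A network is a weighted directed graph with nonnegative affinity matrix $A$, $P=D^{-1}A$, $D=\mathrm{diag}(\sum_j a_{ij})$; strongly connected means all nodes mutually reachable. Each edge $(x,y)$ carries cost $w_{xy}$. The hitting cost $\mathbb{U}_{ij}$ is the expected total cost $\sum w_{X_{k-1}X_k}$ of the edges traversed by the random walk started at $i$ up to the first time it hits $j$ (equal to $0$ if $i=j$). The commute cost is $\mathbb{C}_{ij}=\mathbb{U}_{ij}+\mathbb{U}_{ji}$. *)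

From HB Require Import structures.
From mathcomp Require Import all_boot all_order all_algebra.
From mathcomp Require Import all_classical all_reals all_analysis.
Set Implicit Arguments. Unset Strict Implicit. Unset Printing Implicit Defensive.
Import Order.TTheory GRing.Theory Num.Theory numFieldNormedType.Exports.
Local Open Scope ring_scope.

Section Network.
Variables (R : realType) (n : nat).

Definition degmx (A : 'M[R]_n) : 'M[R]_n := diag_mx (\row_i \sum_j A i j).

Definition transmx (A : 'M[R]_n) : 'M[R]_n := invmx (degmx A) *m A.

Definition edge_rel (A : 'M[R]_n) : rel 'I_n := fun x y => 0 < A x y.

Definition strongly_connected (A : 'M[R]_n) : Prop :=
  (forall i j, 0 <= A i j) /\ (forall i j : 'I_n, connect (edge_rel A) i j).

Definition stationary (P : 'M[R]_n) (pi : 'rV[R]_n) : Prop :=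
  (forall i, 0 <= pi 0 i) /\ \sum_i pi 0 i = 1 /\ pi *m P = pi.

Definition moore_penrose (M X : 'M[R]_n) : Prop :=
  [/\ M *m X *m M = M, X *m M *m X = X,
      (M *m X)^T = M *m X & (X *m M)^T = X *m M].

(* Contribution to the expected cost of the walk from i which first hits j
   after exactly k steps: sum over paths x_0 = i, x_1, ..., x_k = j with
   x_t <> j for t < k, of Prob(path) * (total cost of the path). *)
Definition hit_term (P W : 'M[R]_n) (i j : 'I_n) (k : nat) : R :=
  \sum_(x : {ffun 'I_k.+1 -> 'I_n} |
          [&& x ord0 == i, x ord_max == j &
              [forall t : 'I_k, x (widen_ord (leqnSn k) t) != j]])
    (\prod_(t < k) P (x (inord t)) (x (inord t.+1))) *
    (\sum_(t < k) W (x (inord t)) (x (inord t.+1))).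

Definition hitting_cost (P W : 'M[R]_n) (i j : 'I_n) : R :=
  if i == j then 0 else limn (series (hit_term P W i j) : R^nat).

Definition commute_cost (P W : 'M[R]_n) (i j : 'I_n) : R :=
  hitting_cost P W i j + hitting_cost P W j i.

End Network.

(* Conditioning on the first step, x |-> U_xj solves the Dirichlet problem
     u_j = 0,   u_x = r_x + sum_b p_xb u_b   (x <> j),
   where r_x = sum_b p_xb w_xb is the expected cost of one step; on an
   irreducible chain the maximum principle makes its solution unique.
   The left kernel of L = Pi (I - P) consists of the constant row vectors, so
   L L^+ fixes every zero-sum vector; applied to g - (sum_m g_m) e_j this shows
   that x |-> sum_m (L^+_xm - L^+_jm + L^+_jj - L^+_xj) g_m solves the same
   problem.  Its instance r = 1 is a finite solution of the expected hitting
   time equation; it bounds sum_k k Prob(first hit of j at step k), hence makes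
   the series defining U_xj absolutely convergent. *)

From HB Require Import structures.
From mathcomp Require Import all_boot all_order all_algebra.
From mathcomp Require Import all_classical all_reals all_analysis.
From mathcomp Require Import ring lra.
Import Order.TTheory GRing.Theory Num.Theory numFieldNormedType.Exports.
Local Open Scope classical_set_scope.
Local Open Scope ring_scope.
Set Implicit Arguments. Unset Strict Implicit. Unset Printing Implicit Defensive.

Lemma sumr_if_eq_and (R : nmodType) (T : finType) (i : T) (Q : pred T) (f : T -> R) :
  \sum_a (if (a == i) && Q a then f a else 0) = if Q i then f i else 0.
Proof. by rewrite (bigD1 i) //= eqxx big1 ?addr0 // => a /negPf ->. Qed.

Section FirstHitPaths.
Variables (R : realType) (n : nat) (P W : 'M[R]_n) (j : 'I_n).

Definition first_hit_path k (i : 'I_n) (x : {ffun 'I_k.+1 -> 'I_n}) : bool :=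
  [&& x ord0 == i, x ord_max == j &
      [forall t : 'I_k, x (widen_ord (leqnSn k) t) != j]].

Definition path_prob k (x : {ffun 'I_k.+1 -> 'I_n}) : R :=
  \prod_(t < k) P (x (inord t)) (x (inord t.+1)).

Definition path_cost k (x : {ffun 'I_k.+1 -> 'I_n}) : R :=
  \sum_(t < k) W (x (inord t)) (x (inord t.+1)).

Definition first_hit_prob k (i : 'I_n) : R :=
  \sum_(x : {ffun 'I_k.+1 -> 'I_n} | first_hit_path i x) path_prob x.

Lemma hit_termE k i : hit_term P W i j k =
  \sum_(x : {ffun 'I_k.+1 -> 'I_n} | first_hit_path i x) path_prob x * path_cost x.
Proof. by []. Qed.

Definition path_cons k (a : 'I_n) (y : {ffun 'I_k.+1 -> 'I_n}) :
    {ffun 'I_k.+2 -> 'I_n} :=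
  [ffun t : 'I_k.+2 => if nat_of_ord t is m.+1 then y (inord m) else a].

Lemma path_cons_inord0 k a (y : {ffun 'I_k.+1 -> 'I_n}) : path_cons a y (inord 0) = a.
Proof. by rewrite ffunE inordK. Qed.

Lemma path_cons_inordS k a (y : {ffun 'I_k.+1 -> 'I_n}) m : (m < k.+1)%N ->
  path_cons a y (inord m.+1) = y (inord m).
Proof. by move=> Hm; rewrite ffunE inordK. Qed.

Lemma path_cons_last k a (y : {ffun 'I_k.+1 -> 'I_n}) :
  path_cons a y ord_max = y ord_max.
Proof. by rewrite ffunE; congr (y _); apply/val_inj; rewrite /= inordK. Qed.

Lemma sum_path_cons k (F : {ffun 'I_k.+2 -> 'I_n} -> R) :
  \sum_x F x = \sum_a \sum_y F (path_cons a y).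
Proof.
rewrite pair_big (reindex (fun p => path_cons p.1 p.2)) //=.
exists (fun x => (x ord0, [ffun t : 'I_k.+1 => x (inord t.+1)])) => [[a y] _ | x _] /=.
  congr pair; first by rewrite ffunE.
  by apply/ffunP => t; rewrite ffunE path_cons_inordS // inord_val.
apply/ffunP => -[[|m] Hm]; rewrite !ffunE; first by congr (x _); apply/val_inj.
by rewrite /= ffunE; congr (x _); apply/val_inj; rewrite /= !inordK.
Qed.

Lemma big_edges_cons (idx : R) (op : Monoid.law idx) (F : 'I_n -> 'I_n -> R)
    k a (y : {ffun 'I_k.+1 -> 'I_n}) :
  \big[op/idx]_(t < k.+1) F (path_cons a y (inord t)) (path_cons a y (inord t.+1)) =
  op (F a (y ord0)) (\big[op/idx]_(t < k) F (y (inord t)) (y (inord t.+1))).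
Proof.
rewrite big_ord_recl path_cons_inord0 path_cons_inordS // inord_val.
congr (op _ _); apply: eq_bigr => t _.
by rewrite /= !path_cons_inordS // ltnS // ltnW.
Qed.

Lemma path_prob_cons k a (y : {ffun 'I_k.+1 -> 'I_n}) :
  path_prob (path_cons a y) = P a (y ord0) * path_prob y.
Proof. exact: big_edges_cons. Qed.

Lemma path_cost_cons k a (y : {ffun 'I_k.+1 -> 'I_n}) :
  path_cost (path_cons a y) = W a (y ord0) + path_cost y.
Proof. exact: big_edges_cons. Qed.

Lemma first_hit_path_start k i (x : {ffun 'I_k.+1 -> 'I_n}) :
  first_hit_path i x = (x ord0 == i) && first_hit_path (x ord0) x.
Proof. by rewrite /first_hit_path eqxx. Qed.

Lemma first_hit_path_cons k i a (y : {ffun 'I_k.+1 -> 'I_n}) :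
  first_hit_path i (path_cons a y) = [&& a == i, a != j & first_hit_path (y ord0) y].
Proof.
rewrite /first_hit_path path_cons_last ffunE eqxx /=.
case: (a == i) (y ord_max == j) => [] [] //=; rewrite ?andbF //.
apply/forallP/andP => [H|[aj /forallP H] [[|m] Hm]]; rewrite ?ffunE //=.
  split; first by have := H ord0; rewrite ffunE.
  apply/forallP => t; have := H (lift ord0 t); rewrite ffunE /=.
  apply: contra_neq => <-; congr (y _); apply/val_inj.
  by rewrite /= add0n (inordK (ltnW (ltn_ord t))).
have := H (@Ordinal k m Hm); apply: contra_neq => <-.
by congr (y _); apply/val_inj; rewrite /= (inordK (ltnW Hm)).
Qed.

Lemma sum_first_hit_pathS k i (F : {ffun 'I_k.+2 -> 'I_n} -> R) :
  \sum_(x | first_hit_path i x) F x =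
  (i != j)%:R * \sum_b \sum_(y | first_hit_path b y) F (path_cons i y).
Proof.
rewrite big_mkcond sum_path_cons.
rewrite (eq_bigr (fun a => if (a == i) && (a != j) then
    \sum_(y : {ffun 'I_k.+1 -> 'I_n})
      (if first_hit_path (y ord0) y then F (path_cons i y) else 0)
    else 0)); last first.
  move=> a _; under eq_bigr => y _ do rewrite first_hit_path_cons.
  by case: eqP => [->|_]; case: (_ != j); rewrite //= big1.
rewrite sumr_if_eq_and; case: (i != j); rewrite ?mul0r ?mul1r //.
rewrite [RHS](exchange_big_dep xpredT) //=; apply: eq_bigr => y _.
rewrite big_mkcond /=; under eq_bigr => b _ do rewrite first_hit_path_start eq_sym.
by rewrite sumr_if_eq_and.
Qed.

Lemma first_hit_prob0 i : first_hit_prob 0 i = (i == j)%:R.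
Proof.
rewrite /first_hit_prob (reindex (fun a => [ffun _ : 'I_1 => a])) /=; last first.
  exists (fun x : {ffun 'I_1 -> 'I_n} => x ord0) => [a _|x _]; first by rewrite ffunE.
  by apply/ffunP => t; rewrite ffunE [t]ord1.
rewrite big_mkcond (eq_bigr (fun a => if (a == i) && (a == j) then 1 else 0)).
  by rewrite sumr_if_eq_and; case: (i == j).
move=> a _; rewrite /first_hit_path /path_prob big_ord0 !ffunE.
have -> : [forall t : 'I_0, [ffun=> a] (widen_ord (leqnSn 0) t) != j].
  by apply/forallP => -[].
by rewrite andbT.
Qed.

Lemma first_hit_probS k i :
  first_hit_prob k.+1 i = (i != j)%:R * \sum_b P i b * first_hit_prob k b.
Proof.
rewrite /first_hit_prob sum_first_hit_pathS; congr (_ * _); apply: eq_bigr => b _.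
rewrite big_distrr; apply: eq_bigr => y /andP[/eqP y0 _].
by rewrite path_prob_cons y0.
Qed.

Lemma hit_term0 i : hit_term P W i j 0 = 0.
Proof. by rewrite hit_termE big1 // => x _; rewrite /path_cost big_ord0 mulr0. Qed.

Lemma hit_termS k i : hit_term P W i j k.+1 =
  (i != j)%:R * \sum_b P i b * (W i b * first_hit_prob k b + hit_term P W b j k).
Proof.
rewrite hit_termE sum_first_hit_pathS; congr (_ * _); apply: eq_bigr => b _.
rewrite hit_termE /first_hit_prob big_distrr -big_split big_distrr.
apply: eq_bigr => y /andP[/eqP y0 _].
by rewrite path_prob_cons path_cost_cons y0 /=; ring.
Qed.

End FirstHitPaths.

Lemma connect_preserves (T : finType) (e : rel T) (C : pred T) :
  (forall a b, C a -> e a b -> C b) -> forall x y, connect e x y -> C x -> C y.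
Proof.
move=> eC x _ /connectP[p + ->]; elim: p x => [|z p IHp] x //= /andP[exz ez] Cx.
exact: IHp ez (eC _ _ Cx exz).
Qed.

Lemma eq_bound_on_support (R : realDomainType) (I : finType) (q y : I -> R) (M : R) :
  (forall c, 0 <= q c) -> (forall c, y c <= M) -> \sum_c q c * (M - y c) = 0 ->
  forall c, 0 < q c -> y c = M.
Proof.
move=> q_ge0 y_le sum0 c qc_gt0.
have /eqP : q c * (M - y c) = 0.
  by apply: (psumr_eq0P _ sum0) => // d _; rewrite mulr_ge0 // subr_ge0.
by rewrite mulf_eq0 gt_eqF //= subr_eq0 => /eqP.
Qed.

Definition dirichlet_solution (R : pzRingType) (n : nat) (P : 'M[R]_n) (j : 'I_n)
    (r u : 'I_n -> R) : Prop :=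
  u j = 0 /\ forall x, x != j -> u x = r x + \sum_b P x b * u b.

Section IrreducibleChain.
Variables (R : realDomainType) (n : nat) (P : 'M[R]_n).
Hypotheses (P_ge0 : forall a b, 0 <= P a b) (P_sum1 : forall a, \sum_b P a b = 1).
Hypothesis P_irreducible : forall a b, connect [rel x y | 0 < P x y] a b.

Lemma dirichlet_max_principle j v :
  dirichlet_solution P j (fun=> 0) v -> forall x, v x <= 0.
Proof.
move=> [vj vh].
have [m _ m_max] := @arg_maxP _ R _ j xpredT v isT.
suff vm_le0 : v m <= 0 by move=> x; exact: le_trans (m_max x isT) vm_le0.
rewrite leNgt; apply/negP => vm_gt0.
have max_closed a b : v a == v m -> 0 < P a b -> v b == v m.
  move=> /eqP va Pab; apply/eqP.
  apply: (eq_bound_on_support (P_ge0 a) (fun c => m_max c isT)) Pab.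
  have aj : a != j by apply: contraTneq vm_gt0 => aj; rewrite -va aj vj ltxx.
  under eq_bigr => c _ do rewrite mulrBr.
  by rewrite sumrB -big_distrl /= P_sum1 mul1r -va vh // add0r subrr.
have := connect_preserves max_closed (P_irreducible m j) (eqxx _).
by rewrite vj => /eqP vm0; rewrite -vm0 ltxx in vm_gt0.
Qed.

Lemma dirichlet_solution_uniq j r u v :
  dirichlet_solution P j r u -> dirichlet_solution P j r v -> u =1 v.
Proof.
move=> [uj uh] [vj vh].
have diff_sol (s : R) : dirichlet_solution P j (fun=> 0) (fun x => s * (u x - v x)).
  split=> [|x xj]; first by rewrite uj vj subrr mulr0.
  rewrite uh // vh // add0r opprD addrACA subrr add0r -sumrB big_distrr /=.
  by apply: eq_bigr => b _; ring.
move=> x; apply/eqP; rewrite -subr_eq0 eq_le.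
have := dirichlet_max_principle (diff_sol 1) x.
have := dirichlet_max_principle (diff_sol (-1)) x.
by rewrite !mul1r mulN1r oppr_le0 => -> ->.
Qed.

End IrreducibleChain.

Section StationaryDistribution.
Variables (R : realType) (n : nat) (P : 'M[R]_n) (pi : 'rV[R]_n).
Hypothesis P_ge0 : forall a b, 0 <= P a b.
Hypothesis P_irreducible : forall a b, connect [rel x y | 0 < P x y] a b.
Hypothesis pi_stationary : stationary P pi.

Lemma stationary_balance b : pi 0 b = \sum_a pi 0 a * P a b.
Proof. by case: pi_stationary => _ [_ piP]; rewrite -{1}piP mxE. Qed.

Lemma stationary_gt0 x : 0 < pi 0 x.
Proof.
case: pi_stationary => pi_ge0 [pi_sum1 _].
have /hasP[i _ /andP[_ pi_gt0]] : has (fun i => true && (0 < pi 0 i)) (index_enum 'I_n).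
  by rewrite -psumr_neq0 // pi_sum1 oner_neq0.
apply: (connect_preserves (C := fun c => 0 < pi 0 c) _ (P_irreducible i x) pi_gt0).
move=> a b /= pia_gt0 Pab.
rewrite stationary_balance (bigD1 a) //= ltr_pwDl ?mulr_gt0 //.
by apply: sumr_ge0 => c _; rewrite mulr_ge0 //; case: pi_stationary.
Qed.

Lemma laplacian_left_kernel (y : 'rV[R]_n) :
  y *m (diag_mx pi *m (1%:M - P)) = 0 -> forall a b, y 0 a = y 0 b.
Proof.
move=> yL0 a b.
have yD_stationary : y *m diag_mx pi = y *m diag_mx pi *m P.
  by apply/eqP; rewrite -subr_eq0 -{1}(mulmx1 (y *m _)) -mulmxBr -mulmxA yL0.
have [m _ m_max] := @arg_maxP _ R _ a xpredT (y 0) isT.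
suff y_max x : y 0 x = y 0 m by rewrite !y_max.
have max_closed c d : y 0 c != y 0 m -> 0 < P c d -> y 0 d != y 0 m.
  move=> ycm Pcd; apply: contra ycm => /eqP ydm; apply/eqP.
  have q_ge0 i : 0 <= pi 0 i * P i d by rewrite mulr_ge0 //; case: pi_stationary.
  apply: (eq_bound_on_support q_ge0 (fun i => m_max i isT)); last first.
    by rewrite mulr_gt0 // stationary_gt0.
  move/matrixP/(_ 0 d): yD_stationary; rewrite mul_mx_diag !mxE => balance_d.
  under eq_bigr => i _ do rewrite mulrBr.
  rewrite sumrB -big_distrl /= -stationary_balance -ydm [pi 0 d * _]mulrC balance_d.
  by rewrite -sumrB big1 // => i _; rewrite mxE; ring.
apply/eqP; apply: contraT => yxm.
by have := connect_preserves max_closed (P_irreducible x m) yxm; rewrite eqxx.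
Qed.

End StationaryDistribution.

Section GeneralizedInverse.
Variables (R : pzRingType) (n : nat) (M X : 'M[R]_n).
Hypothesis MXM : M *m X *m M = M.
Hypothesis left_kernel_const :
  forall y : 'rV[R]_n, y *m M = 0 -> forall a b, y 0 a = y 0 b.

Lemma ginv_proj_zero_sum (v : 'cV[R]_n) : \sum_a v a 0 = 0 -> M *m X *m v = v.
Proof.
move=> v0; pose N := 1%:M - M *m X.
have N_row_const i a : N i a = N i i.
  have /left_kernel_const/(_ a i) : row i N *m M = 0.
    by rewrite -row_mul mulmxBl mul1mx MXM subrr row0.
  by rewrite !mxE.
have -> : M *m X = 1%:M - N by rewrite /N subKr.
apply/matrixP => x k; rewrite [k]ord1 mulmxBl mul1mx !mxE.
under eq_bigr => a _ do rewrite N_row_const.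
by rewrite -big_distrr /= v0 mulr0 subr0.
Qed.

End GeneralizedInverse.

Lemma sumr_mul_delta (R : pzSemiRingType) (I : finType) (f : I -> R) (j : I) :
  \sum_i f i * (i == j)%:R = f j.
Proof.
by rewrite (bigD1 j) //= eqxx mulr1 big1 ?addr0 // => i /negPf ->; rewrite mulr0.
Qed.

Definition pinv_hitting_cost (R : pzRingType) (n : nat) (Lp : 'M[R]_n)
    (g : 'I_n -> R) (i j : 'I_n) : R :=
  \sum_m (Lp i m - Lp j m + Lp j j - Lp i j) * g m.

Section PinvHittingCost.
Variables (R : fieldType) (n : nat) (P : 'M[R]_n) (pi : 'rV[R]_n) (Lp : 'M[R]_n).
Hypotheses (P_sum1 : forall a, \sum_b P a b = 1) (pi_neq0 : forall x, pi 0 x != 0).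
Hypothesis laplacian_pinv_proj : forall v : 'cV[R]_n,
  \sum_a v a 0 = 0 -> diag_mx pi *m (1%:M - P) *m Lp *m v = v.

Lemma pinv_hitting_cost_solution j (r : 'I_n -> R) :
  dirichlet_solution P j r (pinv_hitting_cost Lp (fun m => r m * pi 0 m) ^~ j).
Proof.
set g := fun m => r m * pi 0 m; set G := \sum_m g m.
pose v : 'cV[R]_n := \col_m (g m - G * (m == j)%:R).
have v_sum0 : \sum_a v a 0 = 0.
  under eq_bigr => a _ do rewrite mxE.
  by rewrite sumrB (sumr_mul_delta (fun=> G)) subrr.
pose w := Lp *m v.
have u_w x : pinv_hitting_cost Lp g x j = w x 0 - w j 0.
  rewrite /pinv_hitting_cost !mxE.
  under [X in _ = X - _]eq_bigr => m _ do rewrite mxE mulrBr [_ * (G * _)]mulrA.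
  under [X in _ = _ - X]eq_bigr => m _ do rewrite mxE mulrBr [_ * (G * _)]mulrA.
  rewrite !sumrB !(sumr_mul_delta (fun m => Lp _ m * G)) !big_distrr -!sumrB.
  by apply: eq_bigr => m _ /=; ring.
have w_step x : x != j -> pi 0 x * (w x 0 - \sum_a P x a * w a 0) = g x.
  move=> xj; move/matrixP/(_ x 0): (laplacian_pinv_proj v_sum0).
  rewrite -mulmxA -/w -mulmxA mul_diag_mx mulmxBl mul1mx !mxE (negPf xj) mulr0 subr0.
  by move=> <-.
split=> [|x xj]; first by rewrite u_w subrr.
rewrite u_w; under eq_bigr => a _ do rewrite u_w mulrBr.
rewrite sumrB -big_distrl /= P_sum1 mul1r.
have := w_step x xj; rewrite /g [pi 0 x * _]mulrC => /(mulIf (pi_neq0 x)) <-.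
ring.
Qed.

End PinvHittingCost.

Lemma cvg_sumr (R : realType) (I : finType) (u : I -> nat -> R) (l : I -> R) :
  (forall i, u i @ \oo --> l i) -> (fun N => \sum_i u i N) @ \oo --> \sum_i l i.
Proof. by move=> ul; apply: cvg_big => //; exact: add_continuous. Qed.

Lemma limn_shiftS (R : realType) (u v : R^nat) (l : R) :
  (forall N, u N.+1 = v N) -> v @ \oo --> l -> limn u = l.
Proof.
move=> uv vl; apply: cvg_lim => //; rewrite -cvg_shiftS.
by under eq_fun => N do rewrite /= uv.
Qed.

Lemma nneg_series_bounded_cvg (R : realType) (u : R^nat) (B : R) :
  (forall k, 0 <= u k) -> (forall N, series u N <= B) -> cvgn (series u).
Proof.
move=> u_ge0 uB; apply: nondecreasing_is_cvgn; first exact: nondecreasing_series.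
by exists B => _ [N _ <-].
Qed.

Section HittingCostSeries.
Variables (R : realType) (n : nat) (P W : 'M[R]_n) (j : 'I_n).
Hypotheses (P_ge0 : forall a b, 0 <= P a b) (P_sum1 : forall a, \sum_b P a b = 1).
Hypothesis dirichlet_uniq : forall r u v,
  dirichlet_solution P j r u -> dirichlet_solution P j r v -> u =1 v.
Variable tau : 'I_n -> R.
Hypothesis tau_solution : dirichlet_solution P j (fun=> 1) tau.

Local Notation F := (first_hit_prob P j).
Local Notation H i := (hit_term P W i j).

Lemma series_first_step (u v : nat -> 'I_n -> R) i :
  (forall k, u k.+1 i = (i != j)%:R * \sum_b P i b * v k b) -> forall N,
  series (u^~ i) N.+1 = u 0%N i + (i != j)%:R * \sum_b P i b * series (v^~ b) N.
Proof.
move=> uS N; rewrite /series /= big_nat_recl //; congr (_ + _).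
under eq_bigr => k _ do rewrite uS.
rewrite -big_distrr /= exchange_big /=; congr (_ * _).
by apply: eq_bigr => b _; rewrite big_distrr.
Qed.

Lemma hit_time_ge0 x : 0 <= tau x.
Proof.
case: tau_solution => tau_j tau_step.
have [m _ m_min] := @arg_minP _ R _ j xpredT tau isT.
apply: le_trans (m_min x isT); have [-> //|mj] := eqVneq m j; first by rewrite tau_j.
suff : 1 + tau m <= tau m by lra.
rewrite [leRHS]tau_step // lerD2l -[leLHS]mul1r -(P_sum1 m) big_distrl /=.
by apply: ler_sum => b _; rewrite ler_wpM2l // m_min.
Qed.

Lemma first_hit_prob_ge0 k i : 0 <= F k i.
Proof.
elim: k i => [|k IHk] i; first by rewrite first_hit_prob0.
by rewrite first_hit_probS mulr_ge0 // sumr_ge0 // => b _; rewrite mulr_ge0.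
Qed.

Lemma series_first_hit_prob_le1 N i : series (F^~ i) N <= 1.
Proof.
elim: N i => [|N IHN] i; first by rewrite /series /= big_geq.
rewrite (@series_first_step F F i (first_hit_probS P j ^~ i)) first_hit_prob0.
case: eqVneq => [//|_]; first by rewrite mul0r addr0.
rewrite add0r mul1r -(P_sum1 i); apply: ler_sum => b _.
by rewrite ler_piMr.
Qed.

Lemma series_hit_time_le N i : series (fun k => k%:R * F k i) N <= tau i.
Proof.
case: tau_solution => tau_j tau_step.
elim: N i => [|N IHN] i; first by rewrite /series /= big_geq // hit_time_ge0.
have stepS k : (k.+1)%:R * F k.+1 i =
    (i != j)%:R * \sum_b P i b * (k%:R * F k b + F k b).
  rewrite first_hit_probS mulrCA big_distrr /=; congr (_ * _).
  by apply: eq_bigr => b _; rewrite -natr1; ring.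
rewrite (@series_first_step (fun k i => k%:R * F k i) _ i stepS) mul0r add0r.
have [->|ij] := eqVneq i j; first by rewrite mul0r tau_j.
rewrite mul1r tau_step // -[in X in _ <= X](P_sum1 i) -big_split /=.
apply: ler_sum => b _; rewrite -[X in _ <= X + _]mulr1 -mulrDr ler_wpM2l //.
rewrite /series /= big_split /= addrC lerD //.
  exact: series_first_hit_prob_le1.
exact: IHN.
Qed.

Let W_bound := \sum_a \sum_b `|W a b|.

Lemma abs_hit_term_le k i : `|H i k| <= W_bound * (k%:R * F k i).
Proof.
have W_le a b : `|W a b| <= W_bound.
  rewrite /W_bound (bigD1 a) //= (bigD1 b) //= -addrA lerDl.
  by rewrite addr_ge0 // !sumr_ge0 // => *; rewrite sumr_ge0.
elim: k i => [|k IHk] i; first by rewrite hit_term0 normr0 mul0r mulr0.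
rewrite hit_termS first_hit_probS normrM normr_nat.
have -> : W_bound * (k.+1%:R * ((i != j)%:R * \sum_b P i b * F k b)) =
    (i != j)%:R * \sum_b P i b * (W_bound * (k.+1%:R * F k b)).
  by rewrite !big_distrr /=; apply: eq_bigr => b _; ring.
rewrite ler_wpM2l //; apply: le_trans (ler_norm_sum _ _ _) _; apply: ler_sum => b _.
rewrite normrM ger0_norm // ler_wpM2l // -natr1 mulrDl mul1r mulrDr addrC.
apply: le_trans (ler_normD _ _) _; rewrite lerD // normrM.
by rewrite (ger0_norm (first_hit_prob_ge0 _ _)) ler_wpM2r // first_hit_prob_ge0.
Qed.

Lemma hit_prob_cvg i : cvgn (series (F^~ i)).
Proof.
apply: nneg_series_bounded_cvg (series_first_hit_prob_le1^~ i).
by move=> k; exact: first_hit_prob_ge0.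
Qed.

Lemma hit_cost_cvg i : cvgn (series (H i)).
Proof.
have W_bound_ge0 : 0 <= W_bound by rewrite sumr_ge0 // => a _; rewrite sumr_ge0.
apply: normed_cvg; apply: (@nneg_series_bounded_cvg _ _ (W_bound * tau i)) => [k|N].
  exact: normr_ge0.
apply: (@le_trans _ _ (W_bound * series (fun k => k%:R * F k i) N)).
  by rewrite /series /= big_distrr; apply: ler_sum => k _; exact: abs_hit_term_le.
by rewrite ler_wpM2l // series_hit_time_le.
Qed.

Lemma hit_prob_first_step i : limn (series (F^~ i)) =
  (i == j)%:R + (i != j)%:R * \sum_b P i b * limn (series (F^~ b)).
Proof.
apply: (limn_shiftS (@series_first_step F F i (first_hit_probS P j ^~ i))).
rewrite first_hit_prob0; apply: cvgD; first exact: cvg_cst.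
apply: cvgM; first exact: cvg_cst.
by apply: cvg_sumr => b; apply: cvgM; [exact: cvg_cst | exact: hit_prob_cvg].
Qed.

Lemma hit_prob_eq1 i : limn (series (F^~ i)) = 1.
Proof.
apply/eqP; rewrite -subr_eq0; apply/eqP.
apply: (@dirichlet_uniq (fun=> 0) (fun x => limn (series (F^~ x)) - 1) (fun=> 0) _ _ i).
  split=> [|x xj].
  - by rewrite hit_prob_first_step eqxx mul0r addr0 subrr.
  - rewrite hit_prob_first_step (negPf xj) add0r mul1r.
    by under [in RHS]eq_bigr => b _ do rewrite mulrBr mulr1; rewrite add0r sumrB P_sum1.
by split=> // x _; rewrite big1 ?addr0 // => b _; rewrite mulr0.
Qed.

Lemma hit_cost_first_step i : limn (series (H i)) =
  (i != j)%:R * \sum_b P i b * (W i b + limn (series (H b))).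
Proof.
apply: (limn_shiftS (@series_first_step (fun k i => H i k)
  (fun k b => W i b * F k b + H b k) i (hit_termS P W j ^~ i))).
rewrite hit_term0; under eq_fun => N do rewrite add0r.
apply: cvgM; first exact: cvg_cst.
apply: cvg_sumr => b; apply: cvgM; first exact: cvg_cst.
have -> : W i b + limn (series (H b)) =
    W i b * limn (series (F^~ b)) + limn (series (H b)).
  by rewrite hit_prob_eq1 mulr1.
have -> : series (fun k => W i b * F k b + H b k) =
    (fun N => W i b * series (F^~ b) N + series (H b) N).
  by apply/funext => N; rewrite /series /= big_split /= -big_distrr.
apply: cvgD; last exact: hit_cost_cvg.
by apply: cvgM; [exact: cvg_cst | exact: hit_prob_cvg].
Qed.

Lemma hitting_cost_solution :
  dirichlet_solution P j (fun x => \sum_b P x b * W x b) (hitting_cost P W ^~ j).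
Proof.
have hitE x : hitting_cost P W x j = limn (series (H x)).
  rewrite /hitting_cost; case: eqVneq => [->|//].
  by rewrite hit_cost_first_step eqxx mul0r.
split=> [|x xj]; first by rewrite /hitting_cost eqxx.
rewrite !hitE hit_cost_first_step xj mul1r -big_split /=.
by apply: eq_bigr => b _; rewrite hitE mulrDr.
Qed.

End HittingCostSeries.

Section Network.
Variables (R : realType) (n : nat) (A : 'M[R]_n) (pi : 'rV[R]_n).
Hypotheses (A_sc : strongly_connected A) (pi_stationary : stationary (transmx A) pi).

(* A node without out-edges forces n = 1 and A = 0, which admits no stationary
   distribution: strong connectivity alone does not give positive degrees. *)
Lemma degree_gt0 i : 0 < \sum_k A i k.
Proof.
case: A_sc => A_ge0 A_conn.
rewrite lt_def sumr_ge0 ?andbT //; apply/negP => /eqP deg0.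
have Ai0 k : A i k = 0 by apply: (psumr_eq0P _ deg0).
have all_i k : k = i.
  have /connectP[[|z p] //= + ->] := A_conn i k.
  by rewrite /edge_rel Ai0 ltxx.
have P0 : transmx A = 0.
  have -> : A = 0 by apply/matrixP => a b; rewrite (all_i a) (all_i b) Ai0 mxE.
  by rewrite /transmx mulmx0.
case: pi_stationary => _ [+ piP]; rewrite -piP P0 mulmx0.
by rewrite big1 => [/eqP|k _]; rewrite ?mxE // eq_sym oner_eq0.
Qed.

Lemma transmxE a b : transmx A a b = A a b / \sum_k A a k.
Proof.
have D_unit : degmx A \in unitmx.
  rewrite unitmxE /degmx det_diag unitfE prodf_seq_neq0.
  by apply/allP => i _; rewrite mxE gt_eqF // degree_gt0.
have : degmx A *m transmx A = A by rewrite /transmx mulmxA mulmxV // mul1mx.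
rewrite /degmx mul_diag_mx => /matrixP/(_ a b); rewrite !mxE => <-.
by rewrite [_ * _ / _]mulrC mulKf // gt_eqF // degree_gt0.
Qed.

Lemma transmx_ge0 a b : 0 <= transmx A a b.
Proof. by case: A_sc => A_ge0 _; rewrite transmxE divr_ge0 // ltW // degree_gt0. Qed.

Lemma transmx_sum1 a : \sum_b transmx A a b = 1.
Proof.
under eq_bigr => b _ do rewrite transmxE.
by rewrite -mulr_suml divff // gt_eqF // degree_gt0.
Qed.

Lemma transmx_irreducible a b : connect [rel x y | 0 < transmx A x y] a b.
Proof.
case: A_sc => _ A_conn; rewrite (eq_connect (e' := edge_rel A)) // => x y.
by rewrite /= transmxE pmulr_lgt0 // invr_gt0 degree_gt0.
Qed.

End Network.

Theorem corollary3 (R : realType) (n : nat) (A W : 'M[R]_n) (pi : 'rV[R]_n)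
  (Lp : 'M[R]_n) :
  strongly_connected A ->
  stationary (transmx A) pi ->
  moore_penrose (diag_mx pi *m (1%:M - transmx A)) Lp ->
  let P := transmx A in
  let g := fun m : 'I_n => (\sum_k P m k * W m k) * pi 0 m in
  forall i j : 'I_n,
    hitting_cost P W i j =
      \sum_m (Lp i m - Lp j m + Lp j j - Lp i j) * g m /\
    commute_cost P W i j =
      (Lp i i + Lp j j - Lp i j - Lp j i) * \sum_m g m.
Proof.
move=> A_sc pi_stat [LLpL _ _ _] P g.
have P_ge0 := transmx_ge0 A_sc pi_stat.
have P_sum1 := transmx_sum1 A_sc pi_stat.
have P_irr := transmx_irreducible A_sc pi_stat.
have dirichlet_uniq := dirichlet_solution_uniq P_ge0 P_sum1 P_irr.
have pi_neq0 x : pi 0 x != 0 by rewrite gt_eqF // (stationary_gt0 P_ge0 P_irr pi_stat).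
have Lp_sol := pinv_hitting_cost_solution P_sum1 pi_neq0
  (ginv_proj_zero_sum LLpL (laplacian_left_kernel P_ge0 P_irr pi_stat)).
have hitE t : hitting_cost P W ^~ t =1 pinv_hitting_cost Lp g ^~ t.
  have U_sol :=
    hitting_cost_solution W P_ge0 P_sum1 (dirichlet_uniq t) (Lp_sol t (fun=> 1)).
  exact: dirichlet_uniq U_sol (Lp_sol t _).
move=> i j; split; first exact: hitE.
rewrite /commute_cost !hitE /pinv_hitting_cost -big_split big_distrr /=.
by apply: eq_bigr => m _; ring.
Qed.
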